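(* In the setting described in the context, suppose a gradient step is taken on the repeated example $(\mathbf{z}^{\mathrm{mem}},\mathbf{e}^{\mathrm{mem}})$ at step $i$, and then $m$ gradient steps are taken on non-repeated examples $(\mathbf{z}^{(i+1)},\mathbf{e}^{(i+1)}),\dots,(\mathbf{z}^{(i+m)},\mathbf{e}^{(i+m)})$. Then $$(\mathbf{e}^{\mathrm{mem}})^\top f^{(i+m)}(\mathbf{z}^{\mathrm{mem}})\ \le\ (\mathbf{e}^{\mathrm{mem}})^\top f^{(i)}(\mathbf{z}^{\mathrm{mem}})-\gamma\, m\,\epsilon\, c_{\min}.$$
   Context: Model: $f(\mathbf{z})=\mathbf{W}_{\mathrm{proj}}\mathbf{z}\in\mathbb{R}^{V}$ (logits over a vocabulary of size $V\ge2$), where $\mathbf{z}=\mathbf{z}(\mathbf{s})$ is the (fixed, since the first layer is frozen) hidden activation of sequence $\mathbf{s}$; $f^{(t)}$ denotes the model with parameter $\mathbf{W}_{\mathrm{proj}}^{(t)}$ after the $t$-th update. Training: batch size 1, cross-entropy loss with softmax $\sigma$, learning rate $\gamma>0$; an update on example $(\mathbf{z},\mathbf{e})$ is $\mathbf{W}_{\mathrm{proj}}\leftarrow\mathbf{W}_{\mathrm{proj}}+\gamma(\mathbf{e}-\sigma(f(\mathbf{z})))\mathbf{z}^\top$. Next-token targets $\mathbf{e}$ are one-hot (standard basis) vectors in $\mathbb{R}^V$; each non-repeated example has target $\mathbf{e}^{(j)}\neq\mathbf{e}^{\mathrm{mem}}$. Assumptions: $\|\mathbf{z}\|_2=1$ for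 all activations; $\|\mathbf{W}_{\mathrm{proj}}\|_2<C_{\mathrm{proj}}/2$ throughout training; $\mathbf{z}^{(j)\top}\mathbf{z}^{\mathrm{mem}}\ge\epsilon>0$ for all non-repeated examples $j$. Constant: $c_{\min}=\exp(-C_{\mathrm{proj}})/V$. *)

From HB Require Import structures.
From mathcomp Require Import all_boot all_order all_algebra.
From mathcomp Require Import all_classical all_reals all_analysis.
Set Implicit Arguments. Unset Strict Implicit. Unset Printing Implicit Defensive.
Import Order.TTheory GRing.Theory Num.Theory.
Local Open Scope ring_scope.
Local Open Scope classical_set_scope.

Definition vnorm2 (R : realType) (n : nat) (x : 'cV[R]_n) : R :=
  Num.sqrt (\sum_(i < n) x i 0 ^+ 2).

Definition spec_norm (R : realType) (p q : nat) (W : 'M[R]_(p, q)) : R :=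
  sup [set vnorm2 (W *m x) | x in [set x : 'cV[R]_q | vnorm2 x = 1]].

Definition softmax (R : realType) (V : nat) (v : 'cV[R]_V) : 'cV[R]_V :=
  \col_(k < V) (expR (v k 0) / \sum_(j < V) expR (v j 0)).

Definition onehot (R : realType) (V : nat) (k : 'I_V) : 'cV[R]_V := delta_mx k 0.

Definition logits (R : realType) (V d : nat) (W : 'M[R]_(V, d)) (z : 'cV[R]_d)
  : 'cV[R]_V := W *m z.

(* one SGD step (batch size 1, cross-entropy) on example (z, e_k) *)
Definition sgd_step (R : realType) (V d : nat) (gamma : R) (W : 'M[R]_(V, d))
  (z : 'cV[R]_d) (k : 'I_V) : 'M[R]_(V, d) :=
  W + gamma *: ((onehot R k - softmax (logits W z)) *m z^T).

Definition eval_target (R : realType) (V : nat) (k : 'I_V) (v : 'cV[R]_V) : R :=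
  ((onehot R k)^T *m v) 0 0.

Definition c_min (R : realType) (V : nat) (Cproj : R) : R :=
  expR (- Cproj) / V%:R.

From HB Require Import structures.
From mathcomp Require Import all_boot all_order all_algebra.
From mathcomp Require Import all_classical all_reals all_analysis.
From mathcomp Require Import ring lra.
Import Order.TTheory GRing.Theory Num.Theory.
Local Open Scope ring_scope.

(* A step on an example (z, e_k) with k <> k^mem moves the k^mem-logit at
   z^mem by -gamma * softmax(f(z))_{k^mem} * z^T z^mem.  Since the spectral
   norm stays below C/2 and z is a unit vector, every logit of f(z) lies in
   [-C/2, C/2], so every softmax probability is at least exp(-C)/V = c_min;
   together with z^T z^mem >= eps each of the m steps lowers the target logit
   by at least gamma * eps * c_min. *)

Lemma eval_targetE {R : realType} {V} (k : 'I_V) (v : 'cV[R]_V) :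
  eval_target k v = v k 0.
Proof. by rewrite /eval_target /onehot trmx_delta -rowE mxE. Qed.

Lemma abs_entry_le_vnorm2 {R : realType} {n} (x : 'cV[R]_n) j :
  `|x j 0| <= vnorm2 x.
Proof.
rewrite /vnorm2 -sqrtr_sqr ler_sqrt; last first.
  by rewrite sumr_ge0 // => i _; rewrite sqr_ge0.
by rewrite (bigD1 j) //= lerDl sumr_ge0 // => i _; rewrite sqr_ge0.
Qed.

Lemma vnorm2_mulmx_le_spec_norm {R : realType} {p q} (W : 'M[R]_(p, q))
    (x : 'cV[R]_q) :
  vnorm2 x = 1 -> vnorm2 (W *m x) <= spec_norm W.
Proof.
move=> x1; apply: ub_le_sup; last by exists x.
(* On unit vectors, |(W y)_k| <= sum_j |W_kj|, which bounds the set. *)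
pose r k := \sum_(j < q) `|W k j|.
exists (Num.sqrt (\sum_(k < p) r k ^+ 2)) => _ [y y1 <-].
rewrite /vnorm2 ler_sqrt; last by rewrite sumr_ge0 // => k _; rewrite sqr_ge0.
apply: ler_sum => k _.
have Wy_le : `|(W *m y) k 0| <= r k.
  rewrite mxE (le_trans (ler_norm_sum _ _ _)) // ler_sum // => j _.
  by rewrite normrM ler_piMr // -y1 abs_entry_le_vnorm2.
rewrite -real_normK ?num_real // lerXn2r // ?nnegrE //.
exact: le_trans Wy_le.
Qed.

Lemma abs_logit_le_spec_norm {R : realType} {V d} (W : 'M[R]_(V, d))
    (z : 'cV[R]_d) k :
  vnorm2 z = 1 -> `|logits W z k 0| <= spec_norm W.
Proof.
move=> z1; rewrite /logits; apply: (le_trans (abs_entry_le_vnorm2 _ k)).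
exact: vnorm2_mulmx_le_spec_norm.
Qed.

Lemma softmax_ge_c_min {R : realType} {V} (C : R) (v : 'cV[R]_V) k :
  (forall j, `|v j 0| <= C / 2) -> c_min V C <= softmax v k 0.
Proof.
move=> v_bd; rewrite /c_min /softmax mxE.
have V_gt0 : 0 < V%:R :> R by rewrite ltr0n (leq_ltn_trans _ (ltn_ord k)).
have c_minE : expR (- C) / V%:R = expR (- (C / 2)) / (V%:R * expR (C / 2)).
  by rewrite invfM mulrA mulrAC -expRN -expRD; congr (expR _ * _); lra.
rewrite c_minE ler_pM ?expR_ge0 ?invr_ge0 ?mulr_ge0 ?ler0n ?expR_ge0 //.
  by rewrite ler_expR; case/ler_normlP: (v_bd k); rewrite lerNl.
rewrite lef_pV2 ?posrE ?mulr_gt0 ?expR_gt0 //; last first.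
  by rewrite (bigD1 k) //= ltr_wpDr ?expR_gt0 // sumr_ge0 // => j _; rewrite expR_ge0.
rewrite mulr_natl -[V in _ *+ V]card_ord -sumr_const ler_sum // => j _.
by rewrite ler_expR; case/ler_normlP: (v_bd j).
Qed.

Lemma sgd_step_logit_off_target {R : realType} {V d} (gamma : R)
    (W : 'M[R]_(V, d)) (z zm : 'cV[R]_d) (k k' : 'I_V) :
  k' != k ->
  logits (sgd_step gamma W z k') zm k 0 =
  logits W zm k 0 - gamma * (softmax (logits W z) k 0 * (z^T *m zm) 0 0).
Proof.
move=> k'k; rewrite /logits /sgd_step mulmxDl -scalemxAl -mulmxA.
rewrite [LHS]mxE [X in _ + X]mxE [X in _ * X]mxE big_ord1.
rewrite [X in _ * (X * _)]mxE /onehot !mxE eq_sym (negbTE k'k) /=; ring.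
Qed.

Lemma sgd_step_logit_decrease {R : realType} {V d} (gamma C eps : R)
    (W : 'M[R]_(V, d)) (z zm : 'cV[R]_d) (k k' : 'I_V) :
  0 <= gamma -> 0 <= eps -> k' != k -> vnorm2 z = 1 ->
  spec_norm W <= C / 2 -> eps <= (z^T *m zm) 0 0 ->
  logits (sgd_step gamma W z k') zm k 0
    <= logits W zm k 0 - gamma * eps * c_min V C.
Proof.
move=> gamma_ge0 eps_ge0 k'k z1 W_bd eps_le.
rewrite sgd_step_logit_off_target // lerD2l lerN2 -mulrA ler_wpM2l //.
have p_ge : c_min V C <= softmax (logits W z) k 0.
  apply: softmax_ge_c_min => j.
  exact: le_trans (abs_logit_le_spec_norm _ _ _ z1) W_bd.
rewrite mulrC ler_pM // /c_min divr_ge0 ?expR_ge0 ?ler0n //.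
Qed.

Lemma le_sub_mulrn_of_step {R : numDomainType} (a : nat -> R) (delta : R) m :
  (forall n, (n < m)%N -> a n.+1 <= a n - delta) ->
  a m <= a 0%N - m%:R * delta.
Proof.
elim: m => [_|m IH step]; first by rewrite mul0r subr0.
apply: (le_trans (step m (ltnSn m))).
have := IH (fun n lt_nm => step n (leqW lt_nm)).
by rewrite -addn1 natrD mulrDl mul1r opprD addrA lerD2r.
Qed.

Theorem theoremG2 (R : realType) (V d : nat) (hV : (1 < V)%N)
  (gamma Cproj eps : R) (hgamma : 0 < gamma) (heps : 0 < eps)
  (W : nat -> 'M[R]_(V, d))          (* W t = W_proj^(t), after the t-th update *)
  (zs : nat -> 'cV[R]_d)             (* activation of the t-th training example *)
  (es : nat -> 'I_V)                 (* target token (one-hot index) of the t-th example *)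
  (zmem : 'cV[R]_d) (kmem : 'I_V)    (* the repeated example (z^mem, e^mem) *)
  (hstep : forall t, W t.+1 = sgd_step gamma (W t) (zs t.+1) (es t.+1))
  (hznorm : forall t, vnorm2 (zs t) = 1) (hzmem : vnorm2 zmem = 1)
  (hW : forall t, spec_norm (W t) < Cproj / 2)
  (i m : nat) (hi : (0 < i)%N)
  (hmem_z : zs i = zmem) (hmem_e : es i = kmem)
  (hnr_e : forall j, (i < j <= i + m)%N -> es j <> kmem)
  (hnr_z : forall j, (i < j <= i + m)%N -> eps <= ((zs j)^T *m zmem) 0 0) :
  eval_target kmem (logits (W (i + m)%N) zmem)
    <= eval_target kmem (logits (W i) zmem) - gamma * m%:R * eps * c_min V Cproj.
Proof.
rewrite !eval_targetE.
have -> : gamma * m%:R * eps * c_min V Cproj = m%:R * (gamma * eps * c_min V Cproj)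
  by ring.
pose a n := logits (W (i + n)%N) zmem kmem 0.
have -> : logits (W i) zmem kmem 0 = a 0%N by rewrite /a addn0.
apply: (le_sub_mulrn_of_step a) => n lt_nm.
have range : (i < i + n.+1 <= i + m)%N.
  by rewrite -{1}[i]addn0 ltn_add2l leq_add2l lt_nm.
rewrite /a addnS hstep -addnS.
apply: sgd_step_logit_decrease.
- exact: ltW.
- exact: ltW.
- exact/eqP/hnr_e/range.
- exact: hznorm.
- exact: ltW (hW _).
- exact: hnr_z range.
Qed.
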